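(* (i) For every context $\Gamma$: if $\Gamma\ \mathrm{ok}_s$ then $\Gamma\ \mathrm{ok}$. (ii) For every context $\Gamma$ and terms $M,A$: if $\Gamma\vdash_s M:A$ then $\Gamma\vdash M:A$.
   Context: Let $\mathcal V$ (the variables) be a type with decidable equality, equipped with functions $\mathrm{encode}:\mathcal V\to\mathbb N$ and $\mathrm{decode}:\mathbb N\to\mathcal V$ such that $\mathrm{encode}(\mathrm{decode}\,n)=n$ for all $n$. Let $\mathcal C$ (the constants) be any type. Terms $\Lambda$ are generated by: $c\,k$ ($k\in\mathcal C$), $v\,x$ ($x\in\mathcal V$), $\lambda[x:A]M$, $\Pi[x:A]B$ and $M\cdot N$; in $\lambda[x:A]M$ and $\Pi[x:A]B$ the name $x$ binds in $M$ (resp. $B$) but not in $A$. Terms are raw first-order syntax (not identified up to renaming of bound variables) and $\equiv$ denotes syntactic identity. The list of free variables is $\mathrm{fv}(c\,k)=[\,]$, $\mathrm{fv}(v\,x)=[x]$, $\mathrm{fv}(\lambda[x:A]M)=\mathrm{fv}\,A\mathbin{+\!\!+}(\mathrm{fv}\,M-x)$, $\mathrm{fv}(\Pi[x:A]B)=\mathrm{fv}\,A\mathbin{+\!\!+}(\mathrm{fv}\,B-x)$, $\mathrm{fv}(M\cdot N)=\mathrm{fv}\,M\mathbin{+\!\!+}\mathrm{fv}\,N$, where $\mathbin{+\!\!+}$ is list concatenation and $xs-x$ deletes every occurrence of $x$ from $xs$. Fix a function $\chi':\mathrm{List}\,\mathbb N\to\mathbb N$ with $\chi'(ns)\notin ns$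 for every list $ns$, and put $X'(xs)=\mathrm{decode}(\chi'(\mathrm{map}\ \mathrm{encode}\ xs))$. A substitution is any function $\sigma:\mathcal V\to\Lambda$; $\iota=v$ is the identity substitution; $(\sigma,x:=N)(y)=N$ if $y=x$ and $\sigma\,y$ otherwise. For a substitution $\sigma$ and a list $xs$ of variables, $X(\sigma,xs)=X'(\text{concatenation of the lists }\mathrm{fv}(\sigma\,y)\text{ for }y\in xs)$. The action $M\bullet\sigma$ is defined by structural recursion: $c\,k\bullet\sigma=c\,k$; $v\,x\bullet\sigma=\sigma\,x$; $(M\cdot N)\bullet\sigma=(M\bullet\sigma)\cdot(N\bullet\sigma)$; $(\lambda[x:A]M)\bullet\sigma=\lambda[y:A\bullet\sigma](M\bullet(\sigma,x:=v\,y))$ with $y=X(\sigma,\mathrm{fv}\,M-x)$; $(\Pi[x:A]B)\bullet\sigma=\Pi[y:A\bullet\sigma](B\bullet(\sigma,x:=v\,y))$ with $y=X(\sigma,\mathrm{fv}\,B-x)$. Unary substitution is $M[x:=N]=M\bullet(\iota,x:=N)$. $\alpha$-conversion $\sim_\alpha$ is the inductively defined relation with rules: $c\,k\sim_\alpha c\,k$; $v\,x\sim_\alpha v\,x$; $M\cdot N\sim_\alpha M'\cdot N'$ if $M\sim_\alpha M'$ and $N\sim_\alpha N'$; $\lambda[x:A]M\sim_\alpha\lambda[x':A']M'$ if $A\sim_\alpha A'$ and there is a variable $y$ with $y\notin\mathrm{fv}\,M-x$, $y\notin\mathrm{fv}\,M'-x'$ and $M[x:=v\,y]\equiv M'[x':=v\,y]$;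 and the same rule with $\Pi$ in place of $\lambda$. $\beta$-contraction is $(\lambda[x:A]M)\cdot N\ \triangleright_\beta\ M[x:=N]$. One-step $\beta$-reduction $\to_\beta$ is its contextual closure, inductively: $M\to_\beta N$ if $M\triangleright_\beta N$; $\lambda[x:A]M\to_\beta\lambda[x:A]M'$ and $\Pi[x:A]M\to_\beta\Pi[x:A]M'$ if $M\to_\beta M'$; $\lambda[x:A]M\to_\beta\lambda[x:A']M$ and $\Pi[x:A]M\to_\beta\Pi[x:A']M$ if $A\to_\beta A'$; $M\cdot P\to_\beta N\cdot P$ and $P\cdot M\to_\beta P\cdot N$ if $M\to_\beta N$. $\beta$-conversion $\simeq_\beta$ is the equivalence (reflexive–symmetric–transitive) closure of $\sim_\alpha\cup\to_\beta$. Pure Type System: fix a binary relation $\mathcal A\subseteq\mathcal C\times\mathcal C$ (axioms) and a ternary relation $\mathcal R\subseteq\mathcal C\times\mathcal C\times\mathcal C$ (rules). A context is a finite list of pairs $(x,A)$ with $x\in\mathcal V$, $A\in\Lambda$; $\Gamma,x:A$ denotes the list $(x,A)::\Gamma$; $\mathrm{dom}\,\Gamma$ is the list of first components; $(x,A)\in\Gamma$ is list membership. The judgments $\Gamma\ \mathrm{ok}$ and $\Gamma\vdash M:A$ are defined mutually inductively by: (nil) $[\,]\ \mathrm{ok}$; (cons) if $\Gamma\ \mathrm{ok}$, $\Gamma\vdash A:c\,s$ and $x\notin\mathrm{dom}\,\Gamma$ then $\Gamma,x:A\ \mathrm{ok}$; (sort) if $\Gamma\ \mathrm{ok}$ and $\mathcal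 A\,s_1\,s_2$ then $\Gamma\vdash c\,s_1:c\,s_2$; (var) if $\Gamma\ \mathrm{ok}$ and $(x,A)\in\Gamma$ then $\Gamma\vdash v\,x:A$; (prod) if $\mathcal R\,s_1\,s_2\,s_3$, $\Gamma\vdash A:c\,s_1$ and for every $y\notin\mathrm{dom}\,\Gamma$, $\Gamma,y:A\vdash B[x:=v\,y]:c\,s_2$, then $\Gamma\vdash\Pi[x:A]B:c\,s_3$; (abs) if $\mathcal R\,s_1\,s_2\,s_3$, $\Gamma\vdash A:c\,s_1$, for every $z\notin\mathrm{dom}\,\Gamma$, $\Gamma,z:A\vdash B[y:=v\,z]:c\,s_2$, and for every $z\notin\mathrm{dom}\,\Gamma$, $\Gamma,z:A\vdash M[x:=v\,z]:B[y:=v\,z]$, then $\Gamma\vdash\lambda[x:A]M:\Pi[y:A]B$; (app) if $\Gamma\vdash M:\Pi[x:A]B$, $\Gamma\vdash N:A$ and $\Gamma\vdash B[x:=N]:c\,s$ for some $s$, then $\Gamma\vdash M\cdot N:B[x:=N]$; (conv) if $\Gamma\vdash M:A$, $A\simeq_\beta B$ and $\Gamma\vdash B:c\,s$ for some $s$, then $\Gamma\vdash M:B$. (The premises quantified over all fresh names in (prod) and (abs) are infinitely branching.) Finitary (standard) presentation: the judgments $\Gamma\ \mathrm{ok}_s$ and $\Gamma\vdash_s M:A$ are defined mutually inductively by: (nil) $[\,]\ \mathrm{ok}_s$; (cons) if $\Gamma\ \mathrm{ok}_s$, $\Gamma\vdash_s A:c\,s$ and $x\notin\mathrm{dom}\,\Gamma$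 then $\Gamma,x:A\ \mathrm{ok}_s$; (sort) if $\Gamma\ \mathrm{ok}_s$ and $\mathcal A\,s_1\,s_2$ then $\Gamma\vdash_s c\,s_1:c\,s_2$; (var) if $\Gamma\ \mathrm{ok}_s$ and $(x,A)\in\Gamma$ then $\Gamma\vdash_s v\,x:A$; (prod) if $\mathcal R\,s_1\,s_2\,s_3$, $y\notin\mathrm{fv}\,B-x$, $\Gamma\vdash_s A:c\,s_1$ and $\Gamma,y:A\vdash_s B[x:=v\,y]:c\,s_2$, then $\Gamma\vdash_s\Pi[x:A]B:c\,s_3$; (abs) if $\mathcal R\,s_1\,s_2\,s_3$, $z\notin\mathrm{fv}\,M-x$, $z\notin\mathrm{fv}\,B-y$, $\Gamma\vdash_s A:c\,s_1$, $\Gamma,z:A\vdash_s B[y:=v\,z]:c\,s_2$ and $\Gamma,z:A\vdash_s M[x:=v\,z]:B[y:=v\,z]$, then $\Gamma\vdash_s\lambda[x:A]M:\Pi[y:A]B$; (app) if $\Gamma\vdash_s M:\Pi[x:A]B$ and $\Gamma\vdash_s N:A$ then $\Gamma\vdash_s M\cdot N:B[x:=N]$; (conv) if $\Gamma\vdash_s M:A$, $A\simeq_\beta B$ and $\Gamma\vdash_s B:c\,s$ for some $s$, then $\Gamma\vdash_s M:B$. *)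

From Stdlib Require Import List Arith.
Import ListNotations.

Section PTS.

Variable V : Type.
Variable V_eq_dec : forall x y : V, {x = y} + {x <> y}.
Variable encode : V -> nat.
Variable decode : nat -> V.
Variable C : Type.
(* The fresh-name function chi' : list nat -> nat (its freshness property is a
   hypothesis of the main theorem; it is not needed to define the syntax). *)
Variable chi' : list nat -> nat.

Inductive term : Type :=
| tc : C -> term
| tv : V -> term
| tlam : V -> term -> term -> term   (* lam[x:A]M  =  tlam x A M *)
| tpi : V -> term -> term -> term    (* Pi[x:A]B   =  tpi x A B *)
| tapp : term -> term -> term.

Definition remove_var (xs : list V) (x : V) : list V :=
  filter (fun y => if V_eq_dec y x then false else true) xs.

Fixpoint fv (t : term) : list V :=
  match t with
  | tc _ => []
  | tv x => [x]
  | tlam x A M => fv A ++ remove_var (fv M) x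
  | tpi x A B => fv A ++ remove_var (fv B) x
  | tapp M N => fv M ++ fv N
  end.

Definition X' (xs : list V) : V := decode (chi' (map encode xs)).

Definition subst := V -> term.

Definition iota : subst := tv.

Definition upd (s : subst) (x : V) (N : term) : subst :=
  fun y => if V_eq_dec y x then N else s y.

Definition Xs (s : subst) (xs : list V) : V :=
  X' (flat_map (fun y => fv (s y)) xs).

Fixpoint act (t : term) (s : subst) : term :=
  match t with
  | tc k => tc k
  | tv x => s x
  | tapp M N => tapp (act M s) (act N s)
  | tlam x A M =>
      let y := Xs s (remove_var (fv M) x) in
      tlam y (act A s) (act M (upd s x (tv y)))
  | tpi x A B =>
      let y := Xs s (remove_var (fv B) x) in
      tpi y (act A s) (act B (upd s x (tv y)))
  end.

Definition subst1 (M : term) (x : V) (N : term) : term := act M (upd iota x N).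

Inductive alpha : term -> term -> Prop :=
| alpha_c : forall k, alpha (tc k) (tc k)
| alpha_v : forall x, alpha (tv x) (tv x)
| alpha_app : forall M N M' N', alpha M M' -> alpha N N' ->
    alpha (tapp M N) (tapp M' N')
| alpha_lam : forall x A M x' A' M' y, alpha A A' ->
    ~ In y (remove_var (fv M) x) -> ~ In y (remove_var (fv M') x') ->
    subst1 M x (tv y) = subst1 M' x' (tv y) ->
    alpha (tlam x A M) (tlam x' A' M')
| alpha_pi : forall x A M x' A' M' y, alpha A A' ->
    ~ In y (remove_var (fv M) x) -> ~ In y (remove_var (fv M') x') ->
    subst1 M x (tv y) = subst1 M' x' (tv y) ->
    alpha (tpi x A M) (tpi x' A' M').

Inductive beta_contr : term -> term -> Prop :=
| beta_c : forall x A M N, beta_contr (tapp (tlam x A M) N) (subst1 M x N).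

Inductive beta_step : term -> term -> Prop :=
| bs_contr : forall M N, beta_contr M N -> beta_step M N
| bs_lam_body : forall x A M M', beta_step M M' -> beta_step (tlam x A M) (tlam x A M')
| bs_pi_body : forall x A M M', beta_step M M' -> beta_step (tpi x A M) (tpi x A M')
| bs_lam_dom : forall x A A' M, beta_step A A' -> beta_step (tlam x A M) (tlam x A' M)
| bs_pi_dom : forall x A A' M, beta_step A A' -> beta_step (tpi x A M) (tpi x A' M)
| bs_app_l : forall M N P, beta_step M N -> beta_step (tapp M P) (tapp N P)
| bs_app_r : forall M N P, beta_step M N -> beta_step (tapp P M) (tapp P N).

Inductive beta_conv : term -> term -> Prop :=
| bc_alpha : forall M N, alpha M N -> beta_conv M N
| bc_beta : forall M N, beta_step M N -> beta_conv M N
| bc_refl : forall M, beta_conv M M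
| bc_sym : forall M N, beta_conv M N -> beta_conv N M
| bc_trans : forall M N P, beta_conv M N -> beta_conv N P -> beta_conv M P.

Definition context := list (V * term).
Definition dom (G : context) : list V := map fst G.

Variable Ax : C -> C -> Prop.
Variable Rl : C -> C -> C -> Prop.

Inductive wf : context -> Prop :=
| wf_nil : wf []
| wf_cons : forall G x A s, wf G -> typing G A (tc s) -> ~ In x (dom G) ->
    wf ((x, A) :: G)
with typing : context -> term -> term -> Prop :=
| ty_sort : forall G s1 s2, wf G -> Ax s1 s2 -> typing G (tc s1) (tc s2)
| ty_var : forall G x A, wf G -> In (x, A) G -> typing G (tv x) A
| ty_prod : forall G x A B s1 s2 s3, Rl s1 s2 s3 ->
    typing G A (tc s1) ->
    (forall y, ~ In y (dom G) -> typing ((y, A) :: G) (subst1 B x (tv y)) (tc s2)) ->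
    typing G (tpi x A B) (tc s3)
| ty_abs : forall G x y A B M s1 s2 s3, Rl s1 s2 s3 ->
    typing G A (tc s1) ->
    (forall z, ~ In z (dom G) -> typing ((z, A) :: G) (subst1 B y (tv z)) (tc s2)) ->
    (forall z, ~ In z (dom G) ->
       typing ((z, A) :: G) (subst1 M x (tv z)) (subst1 B y (tv z))) ->
    typing G (tlam x A M) (tpi y A B)
| ty_app : forall G M N x A B s,
    typing G M (tpi x A B) -> typing G N A -> typing G (subst1 B x N) (tc s) ->
    typing G (tapp M N) (subst1 B x N)
| ty_conv : forall G M A B s,
    typing G M A -> beta_conv A B -> typing G B (tc s) -> typing G M B.

Inductive wf_s : context -> Prop :=
| wfs_nil : wf_s []
| wfs_cons : forall G x A s, wf_s G -> typing_s G A (tc s) -> ~ In x (dom G) ->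
    wf_s ((x, A) :: G)
with typing_s : context -> term -> term -> Prop :=
| tys_sort : forall G s1 s2, wf_s G -> Ax s1 s2 -> typing_s G (tc s1) (tc s2)
| tys_var : forall G x A, wf_s G -> In (x, A) G -> typing_s G (tv x) A
| tys_prod : forall G x y A B s1 s2 s3, Rl s1 s2 s3 ->
    ~ In y (remove_var (fv B) x) ->
    typing_s G A (tc s1) ->
    typing_s ((y, A) :: G) (subst1 B x (tv y)) (tc s2) ->
    typing_s G (tpi x A B) (tc s3)
| tys_abs : forall G x y z A B M s1 s2 s3, Rl s1 s2 s3 ->
    ~ In z (remove_var (fv M) x) -> ~ In z (remove_var (fv B) y) ->
    typing_s G A (tc s1) ->
    typing_s ((z, A) :: G) (subst1 B y (tv z)) (tc s2) ->
    typing_s ((z, A) :: G) (subst1 M x (tv z)) (subst1 B y (tv z)) ->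
    typing_s G (tlam x A M) (tpi y A B)
| tys_app : forall G M N x A B,
    typing_s G M (tpi x A B) -> typing_s G N A ->
    typing_s G (tapp M N) (subst1 B x N)
| tys_conv : forall G M A B s,
    typing_s G M A -> beta_conv A B -> typing_s G B (tc s) -> typing_s G M B.

End PTS.

From Pilot Require Import Defs.
From Stdlib Require Import List.
Import ListNotations.

(* Every finitary rule is an instance of the corresponding infinitary one, given two
   facts about the infinitary system.  First, a judgement in [G, y:A] can be renamed
   to [G, w:A] for any [w] fresh for [G]; this turns the single fresh name of the
   finitary (prod) and (abs) into the premises for all fresh names.  Second, in (app)
   the extra premise that [B[x:=N]] is typable follows from type correctness, which
   types [Pi[x:A]B], and substituting [N] for the bound variable.  Both are instances
   of the substitution lemma for well-typed substitutions [D |- sg : G].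

   Since [act] renames binders with names that depend on the substitution,
   substitutions compose only up to alpha-conversion.  The substitution lemma
   therefore needs typing to be closed under alpha-conversion of the subject, and
   that in turn needs conversion of a context entry (the domain of a binder may be
   alpha-converted). *)

Lemma flat_map_ext_in {A B : Type} (f g : A -> list B) l :
  (forall a, In a l -> f a = g a) -> flat_map f l = flat_map g l.
Proof.
  induction l as [|a l IH]; simpl; intros Hfg; [reflexivity|].
  rewrite Hfg by auto; f_equal; auto.
Qed.

Lemma flat_map_flat_map {A B D : Type} (f : A -> list B) (g : B -> list D) l :
  flat_map g (flat_map f l) = flat_map (fun a => flat_map g (f a)) l.
Proof. induction l; simpl; [reflexivity|]. rewrite flat_map_app; congruence. Qed.

Lemma flat_map_singleton {A : Type} (l : list A) : flat_map (fun a => [a]) l = l.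
Proof. induction l; simpl; congruence. Qed.

Section Soundness.

Variable V : Type.
Variable V_eq_dec : forall x y : V, {x = y} + {x <> y}.
Variable encode : V -> nat.
Variable decode : nat -> V.
Hypothesis encode_decode : forall n, encode (decode n) = n.
Variable C : Type.
Variable chi' : list nat -> nat.
Hypothesis chi'_fresh : forall ns, ~ In (chi' ns) ns.
Variable Ax : C -> C -> Prop.
Variable Rl : C -> C -> C -> Prop.

Local Notation term := (Defs.term V C).
Local Notation context := (Defs.context V C).
Local Notation tc := (Defs.tc V C).
Local Notation tv := (Defs.tv V C).
Local Notation tlam := (Defs.tlam V C).
Local Notation tpi := (Defs.tpi V C).
Local Notation remove_var := (Defs.remove_var V V_eq_dec).
Local Notation fv := (Defs.fv V V_eq_dec C).
Local Notation X' := (Defs.X' V encode decode chi').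
Local Notation Xs := (Defs.Xs V V_eq_dec encode decode C chi').
Local Notation iota := (Defs.iota V C).
Local Notation upd := (Defs.upd V V_eq_dec C).
Local Notation act := (Defs.act V V_eq_dec encode decode C chi').
Local Notation subst1 := (Defs.subst1 V V_eq_dec encode decode C chi').
Local Notation alpha := (Defs.alpha V V_eq_dec encode decode C chi').
Local Notation beta_step := (Defs.beta_step V V_eq_dec encode decode C chi').
Local Notation beta_conv := (Defs.beta_conv V V_eq_dec encode decode C chi').
Local Notation dom := (Defs.dom V C).
Local Notation wf := (Defs.wf V V_eq_dec encode decode C chi' Ax Rl).
Local Notation typing := (Defs.typing V V_eq_dec encode decode C chi' Ax Rl).

(** * Substitution *)

Lemma in_remove_var l x y : In y (remove_var l x) <-> In y l /\ y <> x.
Proof.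
  unfold Defs.remove_var; rewrite filter_In.
  destruct (V_eq_dec y x); intuition congruence.
Qed.

Lemma notin_remove_var y l x : ~ In y l -> ~ In y (remove_var l x).
Proof. rewrite in_remove_var; tauto. Qed.

Lemma remove_var_notin l y : ~ In y l -> remove_var l y = l.
Proof.
  induction l as [|a l IH]; simpl; intros Hy; [reflexivity|].
  destruct (V_eq_dec a y) as [->|_]; [tauto|].
  f_equal; apply IH; tauto.
Qed.

Lemma remove_var_app l1 l2 x :
  remove_var (l1 ++ l2) x = remove_var l1 x ++ remove_var l2 x.
Proof. apply filter_app. Qed.

Lemma incl_remove_var l l' x : incl l l' -> incl (remove_var l x) (remove_var l' x).
Proof. intros Hl u; rewrite !in_remove_var; intuition. Qed.

Lemma X'_fresh l : ~ In (X' l) l.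
Proof.
  intros Hin; apply (chi'_fresh (map encode l)).
  unfold Defs.X' in Hin; apply (in_map encode) in Hin.
  rewrite encode_decode in Hin; exact Hin.
Qed.

Lemma Xs_fresh s l : ~ In (Xs s l) (flat_map (fun v => fv (s v)) l).
Proof. apply X'_fresh. Qed.

Lemma Xs_fresh_fv s l v u : In v l -> In u (fv (s v)) -> u <> Xs s l.
Proof. intros Hv Hu ->; apply (Xs_fresh s l), in_flat_map; eauto. Qed.

Lemma Xs_ext s t l : (forall v, In v l -> fv (s v) = fv (t v)) -> Xs s l = Xs t l.
Proof. intros Hst; unfold Defs.Xs; f_equal; apply flat_map_ext_in; exact Hst. Qed.

Lemma upd_same s x N : upd s x N x = N.
Proof. unfold Defs.upd; destruct (V_eq_dec x x); congruence. Qed.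

Lemma upd_other s x N y : y <> x -> upd s x N y = s y.
Proof. unfold Defs.upd; destruct (V_eq_dec y x); congruence. Qed.

Lemma act_ext M s t : (forall v, In v (fv M) -> s v = t v) -> act M s = act M t.
Proof.
  revert s t; induction M as [k|x|x A IHA M IHM|x A IHA M IHM|M IHM N IHN];
    intros s t Hst; simpl in *.
  1,2: auto.
  3: rewrite (IHM s t), (IHN s t) by auto using in_or_app; reflexivity.
  all: rewrite (Xs_ext s t) by (intros; f_equal; apply Hst, in_or_app; auto);
       rewrite (IHA s t) by (intros; apply Hst, in_or_app; auto);
       f_equal; apply IHM; intros u Hu; unfold Defs.upd;
       destruct (V_eq_dec u x); [reflexivity|];
       apply Hst, in_or_app; right; apply in_remove_var; auto.
Qed.

Lemma remove_var_flat_map_upd l s x y :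
  ~ In y (flat_map (fun v => fv (s v)) (remove_var l x)) ->
  remove_var (flat_map (fun v => fv (upd s x (tv y) v)) l) y
  = flat_map (fun v => fv (s v)) (remove_var l x).
Proof.
  induction l as [|a l IH]; intros Hy; simpl; [reflexivity|].
  rewrite remove_var_app; unfold Defs.upd at 1.
  unfold Defs.remove_var in Hy at 1 |- * at 3; simpl in Hy |- *.
  destruct (V_eq_dec a x) as [_|Hax]; simpl in Hy |- *.
  - destruct (V_eq_dec y y) as [_|]; [exact (IH Hy)|congruence].
  - rewrite in_app_iff in Hy; rewrite remove_var_notin by tauto.
    f_equal; apply IH; tauto.
Qed.

Lemma fv_act M s : fv (act M s) = flat_map (fun v => fv (s v)) (fv M).
Proof.
  revert s; induction M as [k|x|x A IHA M IHM|x A IHA M IHM|M IHM N IHN];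
    intros s; simpl.
  1,2: rewrite ?app_nil_r; reflexivity.
  3: rewrite flat_map_app, IHM, IHN; reflexivity.
  all: rewrite flat_map_app, IHA, IHM, remove_var_flat_map_upd
         by apply Xs_fresh; reflexivity.
Qed.

Lemma act_comp M s t : act (act M s) t = act M (fun v => act (s v) t).
Proof.
  revert s t; induction M as [k|x|x A IHA M IHM|x A IHA M IHM|M IHM N IHN];
    intros s t; simpl.
  1,2: reflexivity.
  3: rewrite IHM, IHN; reflexivity.
  all: set (y := Xs s (remove_var (fv M) x));
       assert (Hy : Xs t (remove_var (fv (act M (upd s x (tv y)))) y)
                    = Xs (fun v => act (s v) t) (remove_var (fv M) x))
         by (unfold Defs.Xs; rewrite fv_act, remove_var_flat_map_upd, flat_map_flat_map
               by apply Xs_fresh;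
             f_equal; apply flat_map_ext_in; intros; rewrite fv_act; reflexivity);
       rewrite Hy, IHA, IHM; f_equal; apply act_ext; intros u Hu;
       destruct (V_eq_dec u x) as [->|Hux];
       [ rewrite !upd_same; apply upd_same
       | rewrite !(upd_other _ x _ u) by exact Hux; apply act_ext; intros w Hw;
         apply upd_other; intros ->;
         apply (Xs_fresh_fv s (remove_var (fv M) x) u y);
         [apply in_remove_var|..]; auto ].
Qed.

Lemma act_subst1 M x N s : act (subst1 M x N) s = act M (upd s x (act N s)).
Proof.
  unfold Defs.subst1; rewrite act_comp; apply act_ext; intros v _.
  unfold Defs.upd; destruct (V_eq_dec v x); reflexivity.
Qed.

Lemma subst1_act_upd M s x y N :
  subst1 (act M (upd s x (tv y))) y N
  = act M (upd (fun v => act (s v) (upd iota y N)) x N).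
Proof.
  unfold Defs.subst1; rewrite act_comp; apply act_ext; intros v _.
  destruct (V_eq_dec v x) as [->|Hvx].
  - rewrite !upd_same; apply upd_same.
  - rewrite !upd_other by exact Hvx; reflexivity.
Qed.

Lemma act_subst1_rename M x u s N : ~ In u (remove_var (fv M) x) ->
  act (subst1 M x (tv u)) (upd s u N) = act M (upd s x N).
Proof.
  intros Hu; rewrite act_subst1; apply act_ext; intros v Hv.
  destruct (V_eq_dec v x) as [->|Hvx].
  - rewrite !upd_same; apply upd_same.
  - rewrite !(upd_other _ x _ v) by exact Hvx.
    rewrite upd_other; [reflexivity|].
    intros ->; apply Hu, in_remove_var; auto.
Qed.

Lemma subst1_rename M x u N : ~ In u (remove_var (fv M) x) ->
  subst1 (subst1 M x (tv u)) u N = subst1 M x N.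
Proof. apply act_subst1_rename. Qed.

Lemma in_fv_subst1 M x N u : In u (remove_var (fv M) x) -> In u (fv (subst1 M x N)).
Proof.
  rewrite in_remove_var; intros [Hu Hux].
  unfold Defs.subst1; rewrite fv_act; apply in_flat_map; exists u.
  rewrite upd_other by exact Hux; split; [exact Hu | left; reflexivity].
Qed.

Lemma incl_fv_subst1 M x N : incl (fv (subst1 M x N)) (remove_var (fv M) x ++ fv N).
Proof.
  intros u; unfold Defs.subst1; rewrite fv_act, in_flat_map, in_app_iff.
  intros [v [Hv Hu]]; destruct (V_eq_dec v x) as [->|Hvx].
  - rewrite upd_same in Hu; auto.
  - rewrite upd_other in Hu by exact Hvx; destruct Hu as [<-|[]].
    left; apply in_remove_var; auto.
Qed.

(** * Alpha-conversion *)

Lemma alpha_lam_intro x A M x' A' M' : alpha A A' ->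
  (forall z, subst1 M x (tv z) = subst1 M' x' (tv z)) ->
  alpha (tlam x A M) (tlam x' A' M').
Proof.
  intros HA HM; pose proof (X'_fresh (fv M ++ fv M')) as Hz.
  rewrite in_app_iff in Hz.
  apply alpha_lam with (y := X' (fv M ++ fv M')); auto; apply notin_remove_var; tauto.
Qed.

Lemma alpha_pi_intro x A M x' A' M' : alpha A A' ->
  (forall z, subst1 M x (tv z) = subst1 M' x' (tv z)) ->
  alpha (tpi x A M) (tpi x' A' M').
Proof.
  intros HA HM; pose proof (X'_fresh (fv M ++ fv M')) as Hz.
  rewrite in_app_iff in Hz.
  apply alpha_pi with (y := X' (fv M ++ fv M')); auto; apply notin_remove_var; tauto.
Qed.

Lemma alpha_refl M : alpha M M.
Proof.
  induction M;
    [constructor | constructor | apply alpha_lam_intro | apply alpha_pi_intro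
    | constructor]; auto.
Qed.

Lemma alpha_sym M N : alpha M N -> alpha N M.
Proof.
  induction 1; [constructor | constructor | constructor | eapply alpha_lam
    | eapply alpha_pi]; eauto.
Qed.

Lemma remove_var_fv_subst1 M x z : ~ In z (remove_var (fv M) x) ->
  remove_var (fv (subst1 M x (tv z))) z = remove_var (fv M) x.
Proof.
  intros Hz; unfold Defs.subst1; rewrite fv_act, remove_var_flat_map_upd;
    unfold Defs.iota; simpl; rewrite flat_map_singleton; auto.
Qed.

Section AlphaBody.

Variables (x x' y : V) (M M' : term).
Hypothesis (Hy : ~ In y (remove_var (fv M) x)) (Hy' : ~ In y (remove_var (fv M') x')).
Hypothesis (HMM' : subst1 M x (tv y) = subst1 M' x' (tv y)).

Lemma alpha_body_fv : remove_var (fv M) x = remove_var (fv M') x'.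
Proof.
  rewrite <- (remove_var_fv_subst1 M x y), <- (remove_var_fv_subst1 M' x' y), HMM';
    auto.
Qed.

Lemma alpha_body_act s N : act M (upd s x N) = act M' (upd s x' N).
Proof.
  rewrite <- (act_subst1_rename M x y), <- (act_subst1_rename M' x' y), HMM'; auto.
Qed.

Lemma alpha_body_subst1 N : subst1 M x N = subst1 M' x' N.
Proof. apply alpha_body_act. Qed.

End AlphaBody.

Lemma alpha_fv M N : alpha M N -> fv M = fv N.
Proof.
  induction 1 as [| |M N M' N' _ IHM _ IHN|x A M x' A' M' y _ IHA Hy Hy' E
    |x A M x' A' M' y _ IHA Hy Hy' E]; simpl.
  1,2: reflexivity.
  1: congruence.
  all: rewrite IHA, (alpha_body_fv x x' y M M'); auto.
Qed.

Lemma alpha_act M N : alpha M N -> forall s, act M s = act N s.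
Proof.
  induction 1 as [| |M N M' N' _ IHM _ IHN|x A M x' A' M' y _ IHA Hy Hy' E
    |x A M x' A' M' y _ IHA Hy Hy' E]; intros s; simpl.
  1,2: reflexivity.
  1: congruence.
  all: rewrite IHA, (alpha_body_fv x x' y M M') by auto;
       f_equal; apply (alpha_body_act x x' y M M'); auto.
Qed.

Lemma alpha_act_pointwise M s t :
  (forall v, In v (fv M) -> alpha (s v) (t v)) -> alpha (act M s) (act M t).
Proof.
  revert s t; induction M as [k|x|x A IHA M IHM|x A IHA M IHM|M IHM N IHN];
    intros s t Hst; simpl in *.
  1,2: auto using alpha_refl.
  3: constructor; auto using in_or_app.
  all: rewrite (Xs_ext s t) by (intros; apply alpha_fv, Hst, in_or_app; auto);
       first [apply alpha_lam_intro | apply alpha_pi_intro];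
       [ apply IHA; intros; apply Hst, in_or_app; auto
       | intros z; rewrite !subst1_act_upd; apply act_ext; intros u Hu;
         destruct (V_eq_dec u x) as [->|Hux];
         [ rewrite !upd_same; reflexivity
         | rewrite !upd_other by exact Hux; apply alpha_act, Hst, in_or_app;
           right; apply in_remove_var; auto ] ].
Qed.

Lemma alpha_act_id M t : (forall v, In v (fv M) -> t v = tv v) -> alpha M (act M t).
Proof.
  revert t; induction M as [k|x|x A IHA M IHM|x A IHA M IHM|M IHM N IHN];
    intros t Ht; simpl in *.
  1: constructor.
  1: rewrite Ht by auto; constructor.
  3: constructor; auto using in_or_app.
  all: first [apply alpha_lam_intro | apply alpha_pi_intro];
       [ apply IHA; intros; apply Ht, in_or_app; auto
       | intros z; rewrite subst1_act_upd; apply act_ext; intros u Hu;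
         destruct (V_eq_dec u x) as [->|Hux];
         [ rewrite !upd_same; reflexivity | ] ].
  all: assert (Hu' : In u (remove_var (fv M) x)) by (apply in_remove_var; auto);
       assert (Htu : t u = tv u) by (apply Ht, in_or_app; auto);
       rewrite !upd_other, Htu by exact Hux; simpl;
       rewrite upd_other; [reflexivity|];
       apply (Xs_fresh_fv t _ u); [exact Hu' | rewrite Htu; left; reflexivity].
Qed.

Lemma alpha_act_upd_fresh s l v N : In v l ->
  alpha (s v) (act (s v) (upd iota (Xs s l) N)).
Proof.
  intros Hv; apply alpha_act_id; intros w Hw.
  rewrite upd_other; [reflexivity|]; exact (Xs_fresh_fv s l v w Hv Hw).
Qed.

Lemma alpha_subst1_bound M x s N :
  alpha (act M (upd s x N))
        (subst1 (act M (upd s x (tv (Xs s (remove_var (fv M) x)))))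
           (Xs s (remove_var (fv M) x)) N).
Proof.
  rewrite subst1_act_upd; apply alpha_act_pointwise; intros v Hv.
  destruct (V_eq_dec v x) as [->|Hvx].
  - rewrite !upd_same; apply alpha_refl.
  - rewrite !upd_other by exact Hvx.
    apply alpha_act_upd_fresh, in_remove_var; auto.
Qed.

(** * Beta-reduction *)

Lemma beta_step_fv M N : beta_step M N -> incl (fv N) (fv M).
Proof.
  induction 1 as [? ? [x A M N]| | | | | |]; simpl;
    [ | apply incl_app_app; auto using incl_refl, incl_remove_var ..].
  intros u Hu; apply incl_fv_subst1 in Hu; rewrite !in_app_iff in *; tauto.
Qed.

Lemma subst1_act_upd_rename M s x y y' N :
  (forall v w, In v (remove_var (fv M) x) -> In w (fv (s v)) -> w <> y /\ w <> y') ->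
  subst1 (act M (upd s x (tv y))) y N = subst1 (act M (upd s x (tv y'))) y' N.
Proof.
  intros Hfresh; rewrite !subst1_act_upd; apply act_ext; intros v Hv.
  destruct (V_eq_dec v x) as [->|Hvx]; [rewrite !upd_same; reflexivity|].
  rewrite !(upd_other _ x _ v) by exact Hvx; apply act_ext; intros w Hw.
  destruct (Hfresh v w) as [Hy Hy']; [apply in_remove_var; auto | exact Hw |].
  rewrite !upd_other by assumption; reflexivity.
Qed.

(* Only up to alpha: [act] picks bound names from the free variables, and a step
   may lose some of them. *)
Lemma beta_step_act M N : beta_step M N ->
  forall s, exists K, beta_step (act M s) K /\ alpha K (act N s).
Proof.
  induction 1 as [? ? [x A M N]|x A M M' HMM' IH|x A M M' HMM' IH
    |x A A' M _ IH|x A A' M _ IH|M N P _ IH|M N P _ IH]; intros s; simpl.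
  - eexists; split; [apply bs_contr, beta_c|].
    rewrite act_subst1; apply alpha_sym, alpha_subst1_bound.
  - destruct (IH (upd s x (tv (Xs s (remove_var (fv M) x))))) as [K [HK HKal]].
    eexists; split; [apply bs_lam_body, HK|].
    apply alpha_lam_intro; [apply alpha_refl|]; intros z.
    unfold Defs.subst1 at 1; rewrite (alpha_act _ _ HKal).
    apply subst1_act_upd_rename; intros v w Hv Hw.
    split; apply (Xs_fresh_fv s _ v); auto.
    apply (incl_remove_var (fv M')); [apply beta_step_fv|]; assumption.
  - destruct (IH (upd s x (tv (Xs s (remove_var (fv M) x))))) as [K [HK HKal]].
    eexists; split; [apply bs_pi_body, HK|].
    apply alpha_pi_intro; [apply alpha_refl|]; intros z.
    unfold Defs.subst1 at 1; rewrite (alpha_act _ _ HKal).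
    apply subst1_act_upd_rename; intros v w Hv Hw.
    split; apply (Xs_fresh_fv s _ v); auto.
    apply (incl_remove_var (fv M')); [apply beta_step_fv|]; assumption.
  - destruct (IH s) as [K [HK HKal]].
    eexists; split; [apply bs_lam_dom, HK|].
    apply alpha_lam_intro; [exact HKal | reflexivity].
  - destruct (IH s) as [K [HK HKal]].
    eexists; split; [apply bs_pi_dom, HK|].
    apply alpha_pi_intro; [exact HKal | reflexivity].
  - destruct (IH s) as [K [HK HKal]].
    eexists; split; [apply bs_app_l, HK|]; constructor; auto using alpha_refl.
  - destruct (IH s) as [K [HK HKal]].
    eexists; split; [apply bs_app_r, HK|]; constructor; auto using alpha_refl.
Qed.

Lemma beta_conv_act A B : beta_conv A B -> forall s, beta_conv (act A s) (act B s).
Proof.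
  induction 1 as [A B HAB|A B HAB| |A B _ IH|A B D _ IHAB _ IHBD]; intros s.
  - rewrite (alpha_act _ _ HAB); apply bc_refl.
  - destruct (beta_step_act _ _ HAB s) as [K [HK HKal]].
    apply bc_trans with K; [apply bc_beta | apply bc_alpha]; assumption.
  - apply bc_refl.
  - apply bc_sym, IH.
  - apply bc_trans with (act B s); auto.
Qed.

(** * Structural properties of the infinitary system *)

Lemma typing_wf G M A : typing G M A -> wf G.
Proof. induction 1; assumption. Qed.

Lemma wf_cons_inv x A G : wf ((x, A) :: G) ->
  wf G /\ (exists s, typing G A (tc s)) /\ ~ In x (dom G).
Proof. inversion 1; subst; eauto. Qed.

Lemma in_dom x A (G : context) : In (x, A) G -> In x (dom G).
Proof. exact (in_map fst G (x, A)). Qed.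

Lemma weakening G M A : typing G M A -> forall D, wf D -> incl G D -> typing D M A.
Proof.
  induction 1 as [G s1 s2 _ HAx|G x A _ HxA|G x A B s1 s2 s3 HR _ IHA _ IHB
    |G x y A B M s1 s2 s3 HR _ IHA _ IHB _ IHM|G M N x A B s _ IHM _ IHN _ IHB
    |G M A B s _ IHM HAB _ IHB]; intros D HD HGD.
  - apply ty_sort; assumption.
  - apply ty_var; auto.
  - assert (HA : typing D A (tc s1)) by auto.
    apply ty_prod with s1 s2; [assumption | assumption |].
    intros z Hz; apply IHB.
    + intro Hz'; apply Hz, (incl_map fst HGD), Hz'.
    + apply wf_cons with s1; assumption.
    + apply incl_cons; [left; reflexivity | apply incl_tl, HGD].
  - assert (HA : typing D A (tc s1)) by auto.
    apply ty_abs with s1 s2 s3; [assumption | assumption | |];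
      intros z Hz; [apply IHB | apply IHM].
    1,4: intro Hz'; apply Hz, (incl_map fst HGD), Hz'.
    1,3: apply wf_cons with s1; assumption.
    all: apply incl_cons; [left; reflexivity | apply incl_tl, HGD].
  - apply ty_app with A s; auto.
  - apply ty_conv with A s; auto.
Qed.

Lemma weakening_cons x B G M A : wf ((x, B) :: G) -> typing G M A ->
  typing ((x, B) :: G) M A.
Proof.
  intros HwG HM; apply (weakening _ _ _ HM); [assumption | apply incl_tl, incl_refl].
Qed.

Lemma wf_entry G : wf G -> forall v T, In (v, T) G -> exists s, typing G T (tc s).
Proof.
  induction 1 as [|G x A s HG IHG HA Hx]; intros v T Hin; [destruct Hin|].
  assert (HwG : wf ((x, A) :: G)) by (apply wf_cons with s; assumption).
  destruct Hin as [[= <- <-]|Hin].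
  - exists s; apply weakening_cons; assumption.
  - destruct (IHG v T Hin) as [s' Hs']; exists s'; apply weakening_cons; assumption.
Qed.

Lemma remove_var_incl_subst1 M x y l : ~ In y (fv M) ->
  incl (fv (subst1 M x (tv y))) (y :: l) -> incl (remove_var (fv M) x) l.
Proof.
  intros Hy Hincl u Hu.
  destruct (Hincl u (in_fv_subst1 _ _ _ _ Hu)) as [->|]; [|assumption].
  apply in_remove_var in Hu; tauto.
Qed.

Lemma typing_fv G M A : typing G M A -> incl (fv M) (dom G).
Proof.
  induction 1 as [G s1 s2 _ HAx|G x A _ HxA|G x A B s1 s2 s3 HR _ IHA _ IHB
    |G x y A B M s1 s2 s3 HR _ IHA _ IHB _ IHM|G M N x A B s _ IHM _ IHN _ IHB
    |G M A B s _ IHM HAB _ IHB]; simpl.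
  - intros u [].
  - intros u [<-|[]]; eapply in_dom; eassumption.
  - apply incl_app; [assumption|].
    pose proof (X'_fresh (dom G ++ fv B)) as Hz; rewrite in_app_iff in Hz.
    apply (remove_var_incl_subst1 B x (X' (dom G ++ fv B))); [|apply IHB]; tauto.
  - apply incl_app; [assumption|].
    pose proof (X'_fresh (dom G ++ fv M)) as Hz; rewrite in_app_iff in Hz.
    apply (remove_var_incl_subst1 M x (X' (dom G ++ fv M))); [|apply IHM]; tauto.
  - apply incl_app; assumption.
  - assumption.
Qed.

Lemma wf_fv G v T : wf G -> In (v, T) G -> incl (fv T) (dom G).
Proof.
  intros HG Hin; destruct (wf_entry G HG v T Hin) as [s Hs].
  exact (typing_fv _ _ _ Hs).
Qed.

Lemma wf_app_inv G1 G2 : wf (G1 ++ G2) -> wf G2.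
Proof.
  induction G1 as [|[x A] G1 IH]; simpl; intros HG; [assumption|].
  apply IH, (wf_cons_inv _ _ _ HG).
Qed.

Lemma dom_app_cons G1 y (A A' : term) G :
  dom (G1 ++ (y, A') :: G) = dom (G1 ++ (y, A) :: G).
Proof. unfold Defs.dom; rewrite !map_app; reflexivity. Qed.

Lemma typing_ctx_conv G0 P Q : typing G0 P Q -> forall G1 y A A' G s,
  G0 = G1 ++ (y, A) :: G -> typing G A' (tc s) -> beta_conv A A' ->
  wf (G1 ++ (y, A') :: G) -> typing (G1 ++ (y, A') :: G) P Q.
Proof.
  induction 1 as [G0 s1 s2 HG0 HAx|G0 x T HG0 HxT|G0 x T B s1 s2 s3 HR _ IHT _ IHB
    |G0 x z T B M s1 s2 s3 HR _ IHT _ IHB _ IHM|G0 M N x T B s _ IHM _ IHN _ IHB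
    |G0 M T B s _ IHM HTB _ IHB]; intros G1 y A A' G s0 -> HA' HAA' Hwf.
  - apply ty_sort; assumption.
  - assert (HGG' : incl G (G1 ++ (y, A') :: G))
      by (intros p Hp; apply in_or_app; right; right; exact Hp).
    apply in_app_or in HxT as [HxT|[[= -> ->]|HxT]].
    + apply ty_var; [assumption | apply in_or_app; left; assumption].
    + destruct (wf_cons_inv _ _ _ (wf_app_inv _ _ HG0)) as (_ & [sA HA] & _).
      apply ty_conv with A' sA;
        [| apply bc_sym; assumption | apply (weakening _ _ _ HA); assumption].
      apply ty_var; [assumption | apply in_or_app; right; left; reflexivity].
    + apply ty_var; [assumption | apply HGG'; assumption].
  - assert (HT : typing (G1 ++ (y, A') :: G) T (tc s1)) by eauto.
    apply ty_prod with s1 s2; [assumption | assumption |].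
    intros w Hw; rewrite (dom_app_cons _ _ A) in Hw.
    apply (IHB w Hw ((w, T) :: G1) y A A' G s0); auto.
    apply wf_cons with s1; [assumption.. | rewrite (dom_app_cons _ _ A); assumption].
  - assert (HT : typing (G1 ++ (y, A') :: G) T (tc s1)) by eauto.
    assert (HwT : forall w, ~ In w (dom (G1 ++ (y, A) :: G)) ->
                   wf ((w, T) :: G1 ++ (y, A') :: G))
      by (intros w Hw; apply wf_cons with s1;
          [assumption.. | rewrite (dom_app_cons _ _ A); assumption]).
    apply ty_abs with s1 s2 s3; [assumption | assumption | |];
      intros w Hw; rewrite (dom_app_cons _ _ A) in Hw.
    + apply (IHB w Hw ((w, T) :: G1) y A A' G s0); auto; apply HwT, Hw.
    + apply (IHM w Hw ((w, T) :: G1) y A A' G s0); auto; apply HwT, Hw.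
  - apply ty_app with T s; eauto.
  - apply ty_conv with T s; eauto.
Qed.

Lemma typing_head_conv y A A' G P Q s : typing ((y, A) :: G) P Q ->
  typing G A' (tc s) -> beta_conv A A' -> wf ((y, A') :: G) -> typing ((y, A') :: G) P Q.
Proof. intros HPQ; exact (typing_ctx_conv _ _ _ HPQ [] y A A' G s eq_refl). Qed.

Lemma alpha_subst1_arg M x N N' : alpha N N' -> alpha (subst1 M x N) (subst1 M x N').
Proof.
  intros HN; apply alpha_act_pointwise; intros v _.
  destruct (V_eq_dec v x) as [->|Hvx].
  - rewrite !upd_same; exact HN.
  - rewrite !upd_other by exact Hvx; apply alpha_refl.
Qed.

Lemma typing_alpha G M T : typing G M T -> forall M', alpha M M' -> typing G M' T.
Proof.
  induction 1 as [G s1 s2 HG HAx|G x A HG HxA|G x A B s1 s2 s3 HR HA IHA HB IHB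
    |G x y A B M s1 s2 s3 HR HA IHA HB IHB HM IHM|G M N x A B s HM IHM HN IHN HBN IHBN
    |G M A B s HM IHM HAB HB IHB]; intros P Hal.
  - inversion Hal; subst; apply ty_sort; assumption.
  - inversion Hal; subst; apply ty_var; assumption.
  - inversion Hal as [| | | |? ? ? x' A' B' z HAA' Hz Hz' E]; subst.
    assert (HA' : typing G A' (tc s1)) by auto.
    apply ty_prod with s1 s2; [assumption | assumption |]; intros w Hw.
    rewrite <- (alpha_body_subst1 x x' z B B' Hz Hz' E).
    apply typing_head_conv with A s1; auto using bc_alpha.
    apply wf_cons with s1; [apply (typing_wf _ _ _ HA) | assumption..].
  - inversion Hal as [| | |? ? ? x' A' M' z HAA' Hz Hz' E|]; subst.
    assert (HA' : typing G A' (tc s1)) by auto.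
    apply ty_conv with (tpi y A' B) s3.
    + apply ty_abs with s1 s2 s3; [assumption | assumption | |]; intros w Hw.
      2: rewrite <- (alpha_body_subst1 x x' z M M' Hz Hz' E).
      all: apply typing_head_conv with A s1; auto using bc_alpha.
      all: apply wf_cons with s1; [apply (typing_wf _ _ _ HA) | assumption..].
    + apply bc_alpha, alpha_pi_intro; [apply alpha_sym; assumption | reflexivity].
    + apply ty_prod with s1 s2; assumption.
  - inversion Hal as [| |? ? M1 N1 HMM1 HNN1| |]; subst.
    assert (HBN1 : alpha (subst1 B x N) (subst1 B x N1))
      by (apply alpha_subst1_arg; assumption).
    apply ty_conv with (subst1 B x N1) s;
      [| apply bc_alpha, alpha_sym; assumption | assumption].
    apply ty_app with A s; auto.
  - apply ty_conv with A s; auto.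
Qed.

Lemma typing_act_id G M T s t : typing G M T -> typing G T (tc s) ->
  (forall v, In v (fv T) -> t v = tv v) -> typing G M (act T t).
Proof.
  intros HM HT Ht.
  apply ty_conv with T s; [assumption | apply bc_alpha, alpha_act_id, Ht |].
  apply typing_alpha with T; [assumption | apply alpha_act_id, Ht].
Qed.

(** * The substitution lemma *)

Definition typed_subst (D : context) (sg : V -> term) (G : context) : Prop :=
  forall v T, In (v, T) G -> typing D (sg v) (act T sg).

Lemma typed_subst_cons G D sg u A w : wf ((u, A) :: G) -> wf ((w, act A sg) :: D) ->
  typed_subst D sg G -> typed_subst ((w, act A sg) :: D) (upd sg u (tv w)) ((u, A) :: G).
Proof.
  intros HuG HwD Hsg v T Hin.
  destruct (wf_cons_inv _ _ _ HuG) as (HG & [s HA] & Hu).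
  destruct Hin as [[= <- <-]|Hin].
  - rewrite upd_same, (act_ext A (upd sg _ (tv w)) sg).
    + apply ty_var; [assumption | left; reflexivity].
    + intros v' Hv'; apply upd_other; intros ->; apply Hu, (typing_fv _ _ _ HA), Hv'.
  - rewrite upd_other, (act_ext T (upd sg _ (tv w)) sg).
    + apply weakening_cons; auto.
    + intros v' Hv'; apply upd_other; intros ->; apply Hu, (wf_fv G v T HG Hin), Hv'.
    + intros ->; apply Hu, (in_dom _ _ _ Hin).
Qed.

Lemma typing_subst_binder G A s P x Q y D sg w : typing G A (tc s) ->
  (forall u, ~ In u (dom G) -> forall D sg, wf D -> typed_subst D sg ((u, A) :: G) ->
     typing D (act (subst1 P x (tv u)) sg) (act (subst1 Q y (tv u)) sg)) ->
  incl (remove_var (fv P) x) (dom G) -> incl (remove_var (fv Q) y) (dom G) ->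
  wf ((w, act A sg) :: D) -> typed_subst D sg G ->
  typing ((w, act A sg) :: D) (act P (upd sg x (tv w))) (act Q (upd sg y (tv w))).
Proof.
  intros HA IH HP HQ HwD Hsg.
  (* Any name outside [dom G] will do: the free variables of the bodies lie in [dom G]. *)
  pose proof (X'_fresh (dom G)) as Hu.
  assert (HuG : wf ((X' (dom G), A) :: G))
    by (apply wf_cons with s; [apply (typing_wf _ _ _ HA) | assumption..]).
  pose proof (IH _ Hu _ (upd sg (X' (dom G)) (tv w)) HwD
                (typed_subst_cons _ _ _ _ A w HuG HwD Hsg)) as H.
  rewrite !act_subst1_rename in H
    by (intros Hin; apply Hu; first [apply HP, Hin | apply HQ, Hin]).
  exact H.
Qed.

Lemma typing_subst G M A : typing G M A -> forall D sg, wf D -> typed_subst D sg G ->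
  typing D (act M sg) (act A sg).
Proof.
  induction 1 as [G s1 s2 HG HAx|G x A HG HxA|G x A B s1 s2 s3 HR HA IHA HB IHB
    |G x y A B M s1 s2 s3 HR HA IHA HB IHB HM IHM|G M N x A B s HM IHM HN IHN HBN IHBN
    |G M A B s HM IHM HAB HB IHB]; intros D sg HD Hsg; simpl.
  - apply ty_sort; assumption.
  - apply Hsg; assumption.
  - assert (HAs : typing D (act A sg) (tc s1)) by auto.
    assert (Hprod : typing G (tpi x A B) (tc s3)) by (apply ty_prod with s1 s2; assumption).
    destruct (incl_app_inv _ _ (typing_fv _ _ _ Hprod)) as [_ HBfv].
    apply ty_prod with s1 s2; [assumption | assumption |]; intros w Hw.
    apply typing_alpha with (act B (upd sg x (tv w))); [|apply alpha_subst1_bound].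
    (* The sort [tc s2] is the type [Q] of [typing_subst_binder]: substitution fixes it. *)
    apply (typing_subst_binder G A s1 B x (tc s2) x); auto; [intros ? [] |].
    apply wf_cons with s1; assumption.
  - assert (HAs : typing D (act A sg) (tc s1)) by auto.
    assert (Hprod : typing G (tpi y A B) (tc s3)) by (apply ty_prod with s1 s2; assumption).
    assert (Habs : typing G (tlam x A M) (tpi y A B))
      by (apply ty_abs with s1 s2 s3; assumption).
    destruct (incl_app_inv _ _ (typing_fv _ _ _ Hprod)) as [_ HBfv].
    destruct (incl_app_inv _ _ (typing_fv _ _ _ Habs)) as [_ HMfv].
    assert (HwD : forall w, ~ In w (dom D) -> wf ((w, act A sg) :: D))
      by (intros w Hw; apply wf_cons with s1; assumption).
    assert (HBs : forall w, ~ In w (dom D) ->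
              typing ((w, act A sg) :: D) (act B (upd sg y (tv w))) (tc s2))
      by (intros w Hw; apply (typing_subst_binder G A s1 B y (tc s2) y); auto;
          intros ? []).
    apply ty_abs with s1 s2 s3; [assumption | assumption | |]; intros w Hw.
    + apply typing_alpha with (1 := HBs w Hw), alpha_subst1_bound.
    + apply ty_conv with (act B (upd sg y (tv w))) s2;
        [| apply bc_alpha, alpha_subst1_bound
         | apply typing_alpha with (1 := HBs w Hw), alpha_subst1_bound].
      apply typing_alpha with (act M (upd sg x (tv w))); [|apply alpha_subst1_bound].
      apply (typing_subst_binder G A s1 M x B y); auto.
  - specialize (IHM D sg HD Hsg); specialize (IHN D sg HD Hsg).
    specialize (IHBN D sg HD Hsg); simpl in IHM, IHBN.
    rewrite act_subst1 in *.
    pose proof (alpha_subst1_bound B x sg (act N sg)) as Hal.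
    eapply ty_conv; [| apply bc_alpha, alpha_sym, Hal | exact IHBN].
    apply ty_app with (act A sg) s; [exact IHM | exact IHN |].
    exact (typing_alpha _ _ _ IHBN _ Hal).
  - apply ty_conv with (act A sg) s; auto using beta_conv_act.
Qed.

(** * Admissibility of the finitary rules *)

Lemma typed_subst_upd G D A y N : wf ((y, A) :: G) -> wf D -> incl G D -> typing D N A ->
  typed_subst D (upd iota y N) ((y, A) :: G).
Proof.
  intros HyG HD HGD HN v T Hin.
  destruct (wf_cons_inv _ _ _ HyG) as (HG & [s HA] & Hy).
  assert (Hid : forall U, incl (fv U) (dom G) ->
                forall u, In u (fv U) -> upd iota y N u = tv u).
  { intros U HU u Hu; rewrite upd_other; [reflexivity|]; intros ->; apply Hy, HU, Hu. }
  destruct Hin as [[= <- <-]|Hin].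
  - rewrite upd_same; apply typing_act_id with s;
      [ exact HN | apply (weakening _ _ _ HA D HD HGD)
      | apply Hid, (typing_fv _ _ _ HA) ].
  - destruct (wf_entry G HG v T Hin) as [sT HT].
    rewrite upd_other by (intros ->; apply Hy, (in_dom _ _ _ Hin)).
    apply typing_act_id with sT;
      [ apply ty_var; auto | apply (weakening _ _ _ HT D HD HGD)
      | apply Hid, (typing_fv _ _ _ HT) ].
Qed.

Lemma typing_rename y A G P Q w : typing ((y, A) :: G) P Q -> ~ In w (dom G) ->
  typing ((w, A) :: G) (subst1 P y (tv w)) (subst1 Q y (tv w)).
Proof.
  intros HPQ Hw.
  pose proof (typing_wf _ _ _ HPQ) as HyG.
  destruct (wf_cons_inv _ _ _ HyG) as (HG & [s HA] & _).
  assert (HwG : wf ((w, A) :: G)) by (apply wf_cons with s; assumption).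
  apply (typing_subst _ _ _ HPQ _ _ HwG), typed_subst_upd;
    [ assumption | assumption | apply incl_tl, incl_refl
    | apply ty_var; [assumption | left; reflexivity] ].
Qed.

Lemma type_correctness G M T : typing G M T ->
  (exists s, T = tc s) \/ (exists s, typing G T (tc s)).
Proof.
  induction 1 as [G s1 s2 HG HAx|G x A HG HxA|G x A B s1 s2 s3 HR HA IHA HB IHB
    |G x y A B M s1 s2 s3 HR HA IHA HB IHB HM IHM|G M N x A B s HM IHM HN IHN HBN IHBN
    |G M A B s HM IHM HAB HB IHB]; eauto.
  - right; apply (wf_entry G HG x A HxA).
  - right; exists s3; apply ty_prod with s1 s2; assumption.
Qed.

Lemma typing_pi_inv G P T : typing G P T -> forall x A B, P = tpi x A B ->
  exists s1 s2, typing G A (tc s1) /\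
    forall y, ~ In y (dom G) -> typing ((y, A) :: G) (subst1 B x (tv y)) (tc s2).
Proof.
  induction 1; intros x0 A0 B0 E; try discriminate.
  - injection E as -> -> ->; eauto.
  - eauto.
Qed.

Lemma typing_subst1_sort G x A B s N : typing G (tpi x A B) (tc s) -> typing G N A ->
  exists s2, typing G (subst1 B x N) (tc s2).
Proof.
  intros HP HN.
  destruct (typing_pi_inv _ _ _ HP x A B eq_refl) as (s1 & s2 & HA & HB).
  destruct (incl_app_inv _ _ (typing_fv _ _ _ HP)) as [_ HBfv].
  pose proof (X'_fresh (dom G)) as Hu.
  assert (HG : wf G) by exact (typing_wf _ _ _ HN).
  assert (Hsub : typed_subst G (upd iota (X' (dom G)) N) ((X' (dom G), A) :: G))
    by exact (typed_subst_upd _ _ _ _ _ (typing_wf _ _ _ (HB _ Hu)) HG (incl_refl G) HN).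
  pose proof (typing_subst _ _ _ (HB _ Hu) G _ HG Hsub) as H.
  rewrite act_subst1_rename in H by (intros Hin; apply Hu, HBfv, Hin).
  exists s2; exact H.
Qed.

Scheme wf_s_mut := Induction for wf_s Sort Prop
  with typing_s_mut := Induction for typing_s Sort Prop.
Combined Scheme wf_s_typing_s_mut from wf_s_mut, typing_s_mut.

Theorem standard_typing_sound :
  (forall G, wf_s V V_eq_dec encode decode C chi' Ax Rl G -> wf G) /\
  (forall G M A, typing_s V V_eq_dec encode decode C chi' Ax Rl G M A -> typing G M A).
Proof.
  apply wf_s_typing_s_mut.
  - apply wf_nil.
  - intros G x A s _ HG _ HA Hx; apply wf_cons with s; assumption.
  - intros G s1 s2 _ HG HAx; apply ty_sort; assumption.
  - intros G x A _ HG HxA; apply ty_var; assumption.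
  - intros G x y A B s1 s2 s3 HR Hy _ HA _ HB.
    apply ty_prod with s1 s2; [assumption.. |]; intros w Hw.
    rewrite <- (subst1_rename B x y (tv w)) by assumption.
    exact (typing_rename _ _ _ _ _ w HB Hw).
  - intros G x y z A B M s1 s2 s3 HR HzM HzB _ HA _ HB _ HM.
    apply ty_abs with s1 s2 s3; [assumption.. | |]; intros w Hw;
      rewrite <- (subst1_rename B y z (tv w)) by assumption.
    + exact (typing_rename _ _ _ _ _ w HB Hw).
    + rewrite <- (subst1_rename M x z (tv w)) by assumption.
      exact (typing_rename _ _ _ _ _ w HM Hw).
  - intros G M N x A B _ HM _ HN.
    destruct (type_correctness _ _ _ HM) as [[s E]|[s Hs]]; [discriminate|].
    destruct (typing_subst1_sort _ _ _ _ _ _ Hs HN) as [s2 Hs2].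
    apply ty_app with A s2; assumption.
  - intros G M A B s _ HM HAB _ HB; apply ty_conv with A s; assumption.
Qed.

End Soundness.

Theorem mainTheorem20
  (V : Type) (V_eq_dec : forall x y : V, {x = y} + {x <> y})
  (encode : V -> nat) (decode : nat -> V)
  (encode_decode : forall n, encode (decode n) = n)
  (C : Type)
  (chi' : list nat -> nat) (chi'_fresh : forall ns, ~ In (chi' ns) ns)
  (Ax : C -> C -> Prop) (Rl : C -> C -> C -> Prop) :
  (forall G, @wf_s V V_eq_dec encode decode C chi' Ax Rl G ->
             @wf V V_eq_dec encode decode C chi' Ax Rl G) /\
  (forall G M A, @typing_s V V_eq_dec encode decode C chi' Ax Rl G M A ->
                 @typing V V_eq_dec encode decode C chi' Ax Rl G M A).
Proof.
  exact (standard_typing_sound V V_eq_dec encode decode encode_decode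
           C chi' chi'_fresh Ax Rl).
Qed.
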